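(* Let $s\ge2$, $1\le t\le k-1$, $N$ a positive multiple of $s^t$, $\lambda=N/s^t$, and $p_{\max}$ a positive integer with $p_{\max}\le\lambda$. Then the formulation symmetry group $G(k,s,t)$ of ILP (OA) equals the group $G^{\rm iso}(k,s)\cong S_s\wr S_k$, and $G(k,s,t)$ is contained in the symmetry group $G(k,s,t)^{\rm LP}$ of the LP relaxation of ILP (OA); hence $|G(k,s,t)^{\rm LP}|\ge k!(s!)^k$.
   Context: Variables $x_{\mathbf{i}}$ are indexed by $\mathbf{i}=(i_1,\dots,i_k)\in\{0,\dots,s-1\}^k$ ($x_{\mathbf i}$ is the number of times the symbol combination $\mathbf i$ occurs as a row of an $N\times k$ array). ILP (OA) is: minimize $\sum_{\mathbf i}x_{\mathbf i}$ subject to, for every $t$-subset $J\subseteq\{1,\dots,k\}$ and every $a\in\{0,\dots,s-1\}^J$, $\sum_{\mathbf i:\ i_j=a_j\ \forall j\in J}x_{\mathbf i}=\lambda$; $0\le x_{\mathbf i}\le p_{\max}$; $x_{\mathbf i}\in\mathbb{Z}$. Its LP relaxation drops integrality; with feasible set $\mathcal F$, $G(k,s,t)^{\rm LP}$ is the set of permutations $\pi$ of the index set such that $\pi(x)\in\mathcal F$ and the objective value is preserved for all $x\in\mathcal F$, where $\pi(x)_{\mathbf i}=x_{\pi^{-1}(\mathbf i)}$. For an LP/ILP written as min $c^{\top}x$ s.t. $Ax=b$, $Bx\le d$, the formulation symmetry group is the set of variable permutations $\pi$ with $\pi(c)=c$ for which there exist row permutations $\sigma,\tau$ of $A$ and $B$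 such that permuting the columns of $A,B$ by $\pi$ and rows by $\sigma,\tau$ returns $A,B$, with $b,d$ preserved by $\sigma,\tau$. $G^{\rm iso}(k,s)$ is the group of permutations of $\{0,\dots,s-1\}^k$ generated by permuting coordinates and permuting the symbols $\{0,\dots,s-1\}$ independently within each coordinate (isomorphism operations); it has order $k!(s!)^k$. *)

From HB Require Import structures.
From mathcomp Require Import all_boot all_order all_algebra all_fingroup.
Set Implicit Arguments. Unset Strict Implicit. Unset Printing Implicit Defensive.
Import Order.TTheory GRing.Theory Num.Theory.
Local Open Scope ring_scope.

Notation idx k s := {ffun 'I_k -> 'I_s}.

(* Rows of the equality system of ILP (OA): a pair (J, a) with J a t-subset of
   {1..k} and a in {0..s-1}^J, encoded as a partial assignment
   a : 'I_k -> option 'I_s whose domain {j | a j <> None} is J, |J| = t. *)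
Notation oa_row k s t :=
  {a : {ffun 'I_k -> option 'I_s} | #|[set j | a j != None]| == t}.

(* Generic formulation  min c^T x  s.t.  A x = b,  B x <= d  (integer data). *)

Definition formulation_sym (I RA RB : finType) (c : I -> int)
  (A : RA -> I -> int) (b : RA -> int) (B : RB -> I -> int) (d : RB -> int)
  (pi : {perm I}) : Prop :=
  (forall i, c (pi i) = c i) /\
  (exists sigma : {perm RA},
      (forall r i, A (sigma r) (pi i) = A r i) /\ (forall r, b (sigma r) = b r)) /\
  (exists tau : {perm RB},
      (forall r i, B (tau r) (pi i) = B r i) /\ (forall r, d (tau r) = d r)).

Definition lp_feasible (R : realFieldType) (I RA RB : finType)
  (A : RA -> I -> int) (b : RA -> int) (B : RB -> I -> int) (d : RB -> int)
  (x : I -> R) : Prop :=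
  (forall r, \sum_i (A r i)%:~R * x i = (b r)%:~R) /\
  (forall r, \sum_i (B r i)%:~R * x i <= (d r)%:~R).

Definition perm_vec (R : Type) (I : finType) (pi : {perm I}) (x : I -> R) : I -> R :=
  fun i => x ((pi^-1)%g i).

Definition lp_sym (R : realFieldType) (I RA RB : finType) (c : I -> int)
  (A : RA -> I -> int) (b : RA -> int) (B : RB -> I -> int) (d : RB -> int)
  (pi : {perm I}) : Prop :=
  forall x : I -> R, lp_feasible A b B d x ->
    lp_feasible A b B d (perm_vec pi x) /\
    \sum_i (c i)%:~R * perm_vec pi x i = \sum_i (c i)%:~R * x i.

Definition oa_c (k s : nat) : idx k s -> int := fun _ => 1.

Definition oa_A (k s t : nat) (r : oa_row k s t) (i : idx k s) : int :=
  if [forall j, (sval r j == None) || (sval r j == Some (i j))] then 1 else 0.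

Definition oa_b (k s t lam : nat) : oa_row k s t -> int := fun _ => lam%:Z.

(* Bounds 0 <= x_i <= pmax written as B x <= d:
   row (true, i')  :  x_{i'} <= pmax ;  row (false, i') : - x_{i'} <= 0. *)
Definition oa_B (k s : nat) (r : bool * idx k s) (i : idx k s) : int :=
  if r.1 then (r.2 == i)%:Z else - (r.2 == i)%:Z.

Definition oa_d (k s pmax : nat) (r : bool * idx k s) : int :=
  if r.1 then pmax%:Z else 0.

Definition oa_form_sym (k s t lam pmax : nat) (pi : {perm idx k s}) : Prop :=
  formulation_sym (@oa_c k s) (@oa_A k s t) (@oa_b k s t lam)
    (@oa_B k s) (@oa_d k s pmax) pi.

Definition oa_lp_sym (R : realFieldType) (k s t lam pmax : nat)
  (pi : {perm idx k s}) : Prop :=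
  lp_sym R (@oa_c k s) (@oa_A k s t) (@oa_b k s t lam)
    (@oa_B k s) (@oa_d k s pmax) pi.

Definition iso_gens (k s : nat) : {set {perm idx k s}} :=
  [set pi : {perm idx k s} |
     [exists rho : {perm 'I_k}, [forall i, pi i == [ffun j => i (rho j)]]]
  || [exists j0 : 'I_k, exists tau : {perm 'I_s},
        [forall i, pi i == [ffun j => if j == j0 then tau (i j) else i j]]]].

Definition Giso (k s : nat) : {group {perm idx k s}} := <<iso_gens k s>>%G.

Arguments oa_form_sym : clear implicits.
Arguments oa_lp_sym : clear implicits.
Arguments Giso : clear implicits.

(* A formulation symmetry permutes the rows (J, a) of the equality system, so
   it preserves, for any two points x and y, the number of rows covering both,
   which is C(k - d(x, y), t) with d the Hamming distance.  As 1 <= t <= k - 1,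
   this number is at least C(k - 1, t) exactly when d(x, y) <= 1, so the
   symmetry is an automorphism of the Hamming graph, hence an isometry of the
   Hamming metric.  Such isometries are the maps
   x |-> (tau_j (x_(rho j)))_j, which form the wreath product generated by the
   isomorphism operations, of order k! (s!)^k; conversely each of them
   permutes the rows and the bound constraints.  Finally every formulation
   symmetry is an LP symmetry, by reindexing the sums along the permutation. *)

From HB Require Import structures.
From mathcomp Require Import all_boot all_order all_algebra all_fingroup.
From mathcomp Require Import zify.
Import Order.TTheory GRing.Theory Num.Theory.
Set Implicit Arguments. Unset Strict Implicit. Unset Printing Implicit Defensive.

Lemma formulation_sym_lp_sym (R : realFieldType) (I RA RB : finType)
    (c : I -> int) (A : RA -> I -> int) (b : RA -> int)
    (B : RB -> I -> int) (d : RB -> int) (pi : {perm I}) :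
  formulation_sym c A b B d pi -> lp_sym R c A b B d pi.
Proof.
case=> c_pi [[sigma [A_pi b_sigma]] [tau [B_pi d_tau]]] x [Ax Bx].
have sum_pi (F : I -> R) : (\sum_i F i = \sum_i F (pi i))%R.
  exact: reindex_inj (@perm_inj _ pi).
rewrite /perm_vec; split; last first.
  by rewrite sum_pi; apply: eq_bigr => i _; rewrite permK c_pi.
split=> r.
  rewrite -(permKV sigma r) sum_pi b_sigma -Ax.
  by apply: eq_bigr => i _; rewrite permK A_pi.
rewrite -(permKV tau r) sum_pi d_tau (le_trans _ (Bx _)) //.
by rewrite le_eqVlt; apply/orP; left; apply/eqP/eq_bigr => i _; rewrite permK B_pi.
Qed.

Lemma exists_row_perm (I RA : finType) (T : eqType) (A : RA -> I -> T)
    (pi : {perm I}) :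
  (forall r1 r2, A r1 =1 A r2 -> r1 = r2) ->
  (forall r, exists r', forall i, A r' (pi i) = A r i) ->
  exists sigma : {perm RA}, forall r i, A (sigma r) (pi i) = A r i.
Proof.
move=> A_inj A_pi.
have ex_row r : exists r', [forall i, A r' (pi i) == A r i].
  by have [r' Ar'] := A_pi r; exists r'; apply/forallP => i; rewrite Ar'.
pose g r := xchoose (ex_row r).
have gE r i : A (g r) (pi i) = A r i by apply/eqP/(forallP (xchooseP (ex_row r))).
have g_inj : injective g by move=> r1 r2 g12; apply: A_inj => i; rewrite -gE g12 gE.
by exists (perm g_inj) => r i; rewrite permE gE.
Qed.

Lemma exists_ord_neq s (w : 'I_s) : 1 < s -> exists w' : 'I_s, w' != w.
Proof.
move=> s_gt1; case: (eqVneq (val w) 0) => [w0|w_neq0].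
  by exists (Ordinal s_gt1); rewrite -val_eqE /= w0.
by exists (Ordinal (ltnW s_gt1)); rewrite -val_eqE /= eq_sym.
Qed.

Section Wreath.
Variables k s : nat.
Implicit Types (rho : {perm 'I_k}) (tau : {ffun 'I_k -> {perm 'I_s}}).

Definition wreath_fun rho tau (x : idx k s) : idx k s := [ffun j => tau j (x (rho j))].

Lemma wreath_fun_inj rho tau : injective (wreath_fun rho tau).
Proof.
move=> x y xy; apply/ffunP => j; rewrite -(permKV rho j).
by have := congr1 (fun z : idx k s => z ((rho^-1)%g j)) xy; rewrite !ffunE => /perm_inj.
Qed.

Definition wreath_perm rho tau : {perm idx k s} := perm (@wreath_fun_inj rho tau).

Lemma wreath_permE rho tau x : wreath_perm rho tau x = [ffun j => tau j (x (rho j))].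
Proof. exact: permE. Qed.

Lemma wreath_permM rho rho' tau tau' :
  (wreath_perm rho tau * wreath_perm rho' tau')%g =
  wreath_perm (rho' * rho)%g [ffun j => (tau (rho' j) * tau' j)%g].
Proof.
by apply/permP => x; rewrite permM !wreath_permE; apply/ffunP => j; rewrite !ffunE !permM.
Qed.

Definition wreath_set : {set {perm idx k s}} :=
  [set wreath_perm p.1 p.2 | p : {perm 'I_k} * {ffun 'I_k -> {perm 'I_s}}].

Lemma mem_wreath_set rho tau : wreath_perm rho tau \in wreath_set.
Proof. by apply/imsetP; exists (rho, tau). Qed.

Lemma wreath_set_group : group_set wreath_set.
Proof.
apply/group_setP; split.
  have -> : 1%g = wreath_perm 1 [ffun=> 1%g] :> {perm idx k s}.
    by apply/permP => x; rewrite perm1 wreath_permE; apply/ffunP => j; rewrite !ffunE !perm1.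
  exact: mem_wreath_set.
move=> _ _ /imsetP [[rho tau] _ ->] /imsetP [[rho' tau'] _ ->].
by rewrite wreath_permM mem_wreath_set.
Qed.

Lemma wreath_perm_inj : 1 < s ->
  injective (fun p : {perm 'I_k} * {ffun 'I_k -> {perm 'I_s}} => wreath_perm p.1 p.2).
Proof.
move=> s_gt1 [rho tau] [rho' tau'] /= /permP wreath_eq.
have coord_eq (x : idx k s) j : tau j (x (rho j)) = tau' j (x (rho' j)).
  by have := congr1 (fun y : idx k s => y j) (wreath_eq x); rewrite !wreath_permE !ffunE.
pose a : 'I_s := Ordinal (ltnW s_gt1).
have rho_eq : rho = rho'.
  apply/permP => j; apply/eqP; apply: contraT => rho_neq.
  have [b ba] := exists_ord_neq a s_gt1.
  move: (coord_eq [ffun c => if c == rho j then b else a] j) (coord_eq [ffun=> a] j).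
  rewrite !ffunE eqxx eq_sym (negbTE rho_neq) => tau_b tau_a.
  by move: tau_b; rewrite -tau_a => /perm_inj/eqP; rewrite (negbTE ba).
subst rho'; congr (_, _); apply/ffunP => j; apply/permP => v.
by have := coord_eq [ffun=> v] j; rewrite !ffunE.
Qed.

Lemma card_wreath_set : 1 < s -> #|wreath_set| = k`! * (s`!) ^ k.
Proof.
move=> s_gt1; rewrite card_imset; last exact: wreath_perm_inj.
by rewrite card_prod card_Sn card_ffun card_Sn card_ord.
Qed.

Definition coord_sym (j0 : 'I_k) (sigma : {perm 'I_s}) : {ffun 'I_k -> {perm 'I_s}} :=
  [ffun j => if j == j0 then sigma else 1%g].

Lemma wreath_coord_perm_in_Giso rho : wreath_perm rho [ffun=> 1%g] \in Giso k s.
Proof.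
apply/mem_gen; rewrite inE; apply/orP; left; apply/existsP; exists rho.
by apply/forallP => x; rewrite wreath_permE; apply/eqP/ffunP => j; rewrite !ffunE perm1.
Qed.

Lemma wreath_coord_sym_in_Giso j0 sigma : wreath_perm 1 (coord_sym j0 sigma) \in Giso k s.
Proof.
apply/mem_gen; rewrite inE; apply/orP; right; apply/existsP; exists j0.
apply/existsP; exists sigma; apply/forallP => x; rewrite wreath_permE.
by apply/eqP/ffunP => j; rewrite !ffunE perm1; case: ifP; rewrite ?perm1.
Qed.

Lemma wreath_base_in_Giso tau : wreath_perm 1 tau \in Giso k s.
Proof.
pose tau_on (l : seq 'I_k) := [ffun j => if j \in l then tau j else 1%g].
suff tau_onG l : uniq l -> wreath_perm 1 (tau_on l) \in Giso k s.
  have -> : tau = tau_on (enum 'I_k) by apply/ffunP => j; rewrite ffunE mem_enum.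
  exact/tau_onG/enum_uniq.
elim: l => [_|j l IHl /= /andP [j_notin_l l_uniq]].
  have -> : wreath_perm 1 (tau_on [::]) = 1%g.
    by apply/permP => x; rewrite perm1 wreath_permE; apply/ffunP => j; rewrite !ffunE !perm1.
  exact: group1.
have -> : wreath_perm 1 (tau_on (j :: l)) =
          (wreath_perm 1 (tau_on l) * wreath_perm 1 (coord_sym j (tau j)))%g.
  rewrite wreath_permM mulg1; congr wreath_perm; apply/ffunP => j'.
  rewrite !ffunE perm1 in_cons; case: (eqVneq j' j) => [->|_] /=.
    by rewrite (negbTE j_notin_l) mul1g.
  by rewrite mulg1.
by rewrite groupM ?IHl ?wreath_coord_sym_in_Giso.
Qed.

Lemma iso_gens_wreath : iso_gens k s \subset wreath_set.
Proof.
apply/subsetP => pi; rewrite inE => /orP [/existsP [rho /forallP piE]|].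
  have -> : pi = wreath_perm rho [ffun=> 1%g].
    apply/permP => x; rewrite (eqP (piE x)) wreath_permE.
    by apply/ffunP => j; rewrite !ffunE perm1.
  exact: mem_wreath_set.
case/existsP => j0 /existsP [sigma /forallP piE].
have -> : pi = wreath_perm 1 (coord_sym j0 sigma).
  apply/permP => x; rewrite (eqP (piE x)) wreath_permE; apply/ffunP => j.
  by rewrite !ffunE perm1; case: ifP; rewrite ?perm1.
exact: mem_wreath_set.
Qed.

Lemma Giso_wreath : Giso k s :=: wreath_set.
Proof.
apply/eqP; rewrite eqEsubset (gen_subG _ (Group wreath_set_group)) iso_gens_wreath /=.
apply/subsetP => _ /imsetP [[rho tau] _ ->] /=.
have -> : wreath_perm rho tau = (wreath_perm rho [ffun=> 1%g] * wreath_perm 1 tau)%g.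
  by rewrite wreath_permM mul1g; congr wreath_perm; apply/ffunP => j; rewrite !ffunE mul1g.
by rewrite groupM ?wreath_coord_perm_in_Giso ?wreath_base_in_Giso.
Qed.

End Wreath.

Section Hamming.
Variables k s : nat.
Implicit Types x y z : idx k s.

Definition diff_coords x y : {set 'I_k} := [set j | x j != y j].
Definition hamming x y : nat := #|diff_coords x y|.

Lemma hamming_eq0 x y : (hamming x y == 0) = (x == y).
Proof.
rewrite cards_eq0; apply/eqP/eqP => [xy|->]; last first.
  by apply/setP => j; rewrite !inE eqxx.
apply/ffunP => j; apply/eqP; apply: contraT => xy_j.
have : j \in diff_coords x y by rewrite inE.
by rewrite xy inE.
Qed.

Lemma hamming_xx x : hamming x x = 0.
Proof. by apply/eqP; rewrite hamming_eq0. Qed.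

Lemma hamming_le1 x y c : (forall j, j != c -> x j = y j) -> hamming x y <= 1.
Proof.
move=> xy; rewrite -(cards1 c); apply/subset_leq_card/subsetP => j.
by rewrite !inE; apply: contraR => /xy ->.
Qed.

Lemma hamming_gt1 x y c1 c2 :
  c1 != c2 -> x c1 != y c1 -> x c2 != y c2 -> 1 < hamming x y.
Proof.
move=> c12 xy1 xy2; apply: leq_trans (_ : #|[set c1; c2]| <= _).
  by rewrite cards2 c12.
by apply/subset_leq_card/subsetP => j; rewrite !inE => /orP[] /eqP ->.
Qed.

Lemma hamming_leS m x y :
  hamming x y <= m.+1 <-> exists z, hamming x z <= m /\ hamming z y <= 1.
Proof.
split=> [|[z [xz zy]]]; last first.
  apply: leq_trans (_ : #|diff_coords x z :|: diff_coords z y| <= _).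
    apply/subset_leq_card/subsetP => j.
    by rewrite !inE; case: (x j =P z j) => [->|].
  by rewrite (leq_trans (leq_card_setU _ _)) // -addn1 leq_add.
have [xy0 _|[c xy_c] xy] := set_0Vmem (diff_coords x y).
  exists y; split; first by rewrite /hamming xy0 cards0.
  by rewrite hamming_xx.
exists [ffun j => if j == c then x j else y j]; split; last first.
  by apply: (hamming_le1 (c := c)) => j; rewrite ffunE => /negbTE ->.
rewrite /hamming.
have -> : diff_coords x [ffun j => if j == c then x j else y j] = diff_coords x y :\ c.
  by apply/setP => j; rewrite !inE ffunE; case: (eqVneq j c) => [->|]; rewrite ?eqxx.
by move: xy; rewrite /hamming (cardsD1 c) xy_c.
Qed.

Lemma hamming_update x y y' c : (forall j, j != c -> y j = y' j) ->
  hamming x y + (x c != y' c) = hamming x y' + (x c != y c).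
Proof.
move=> yy'; rewrite /hamming (cardsD1 c (diff_coords x y)) (cardsD1 c (diff_coords x y')).
have -> : diff_coords x y :\ c = diff_coords x y' :\ c.
  by apply/setP => j; rewrite !inE; case: (eqVneq j c) => //= /yy' ->.
by rewrite !inE addnAC [RHS]addnAC [_ + (x c != y c)]addnC.
Qed.

Lemma diff_coords_set1 x y c :
  diff_coords x y = [set c] -> forall c0, (x c0 == y c0) = (c0 != c).
Proof. by move=> Dxy c0; rewrite -in_set1 -Dxy inE negbK. Qed.

End Hamming.

Lemma hamming_perm_isometry k s (f : {perm idx k s}) :
  (forall x y, (hamming (f x) (f y) <= 1) = (hamming x y <= 1)) ->
  forall x y, hamming (f x) (f y) = hamming x y.
Proof.
move=> f_adj.
have f_le m x y : (hamming (f x) (f y) <= m) = (hamming x y <= m).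
  elim: m x y => [|m IHm] x y; first by rewrite !leqn0 !hamming_eq0 (inj_eq perm_inj).
  apply/idP/idP => /hamming_leS [z [xz zy]]; apply/hamming_leS.
    by exists ((f^-1)%g z); rewrite -IHm -f_adj permKV.
  by exists (f z); rewrite IHm f_adj.
by move=> x y; apply/eqP; rewrite eqn_leq f_le leqnn -f_le leqnn.
Qed.

Section HammingIsometry.
Variables (k s : nat) (f : {perm idx k s}) (a0 a1 : 'I_s).
Hypothesis f_isometry : forall x y, hamming (f x) (f y) = hamming x y.
Hypothesis a10 : a1 != a0.

Let base : idx k s := [ffun=> a0].
Let point j v : idx k s := [ffun j' => if j' == j then v else a0].

Let point_a0 j : point j a0 = base.
Proof. by apply/ffunP => j'; rewrite !ffunE; case: ifP. Qed.

Let hamming_base_point j v : hamming base (point j v) = (v != a0).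
Proof.
have := @hamming_update _ _ base base (point j v) j.
rewrite !ffunE !eqxx hamming_xx /= addn0 eq_sym.
by move=> <- // j' /negbTE j'j; rewrite !ffunE j'j.
Qed.

(* [f] sends coordinate [j] to coordinate [image_coord j]: the only one at
   which [f base] and [f (point j a1)] differ. *)
Let image_coord j := odflt j [pick c in diff_coords (f base) (f (point j a1))].

Let diff_image_point j : diff_coords (f base) (f (point j a1)) = [set image_coord j].
Proof.
have /cards1P [c Dc] : hamming (f base) (f (point j a1)) == 1.
  by rewrite f_isometry hamming_base_point a10.
rewrite /image_coord Dc; case: pickP => [c'|/(_ c)]; last by rewrite set11.
by rewrite inE => /eqP ->.
Qed.

Let f_point_off j v c : c != image_coord j -> f (point j v) c = f base c.
Proof.
move=> c_off; have [->|v_a0] := eqVneq v a0; first by rewrite point_a0.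
have /cards1P [c' /diff_coords_set1 Dv] : hamming (f base) (f (point j v)) == 1.
  by rewrite f_isometry hamming_base_point v_a0.
have /diff_coords_set1 D1 := diff_image_point j.
suff c'_img : c' = image_coord j by apply/eqP; rewrite eq_sym Dv c'_img.
apply/eqP; apply: contraT => c'_img.
have : hamming (f (point j v)) (f (point j a1)) <= 1.
  by rewrite f_isometry; apply: (hamming_le1 (c := j)) => j' /negbTE j'j; rewrite !ffunE j'j.
rewrite leqNgt (hamming_gt1 c'_img) //.
  have -> : f (point j a1) c' = f base c' by apply/eqP; rewrite eq_sym D1.
  by rewrite eq_sym Dv eqxx.
have -> : f (point j v) (image_coord j) = f base (image_coord j).
  by apply/eqP; rewrite eq_sym Dv eq_sym.
by rewrite D1 eqxx.
Qed.

Let g j v := f (point j v) (image_coord j).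

(* Moving [x] to [point j v] changes the distance to [x] by the same amount as
   moving [base]; on the image side only coordinate [image_coord j] moves, so
   comparing the two updates pins down [f x (image_coord j)]. *)
Let f_image_coord x j : f x (image_coord j) = g j (x j).
Proof.
have shift v : hamming x base + (x j != v) = hamming x (point j v) + (x j != a0).
  have := @hamming_update _ _ x base (point j v) j.
  by rewrite !ffunE eqxx; apply=> j' /negbTE j'j; rewrite !ffunE j'j.
have fshift v : hamming x base + (f x (image_coord j) != g j v) =
                hamming x (point j v) + (f x (image_coord j) != g j a0).
  rewrite -(f_isometry x base) -(f_isometry x (point j v)) /g point_a0.
  by apply: hamming_update => c c_off; rewrite f_point_off.
have E v : (x j != v) + (f x (image_coord j) != g j a0) =
           (x j != a0) + (f x (image_coord j) != g j v).
  by apply: (@addnI (hamming x base)); rewrite addnA shift [in RHS]addnCA fshift addnCA addnA.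
case: (eqVneq (x j) a0) => [xa0|xa0].
  move: (E a1); rewrite xa0 eq_sym a10 eqxx.
  by case: (f x (image_coord j) =P g j a0) => //; case: (_ != _).
move: (E (x j)); rewrite eqxx xa0.
by case: (f x (image_coord j) =P g j (x j)) => //; case: (_ != _).
Qed.

Let g_inj j : injective (g j).
Proof.
move=> v v' gvv'.
suff /perm_inj/ffunP/(_ j) : f (point j v) = f (point j v') by rewrite !ffunE eqxx.
apply/ffunP => c; have [->|c_off] := eqVneq c (image_coord j); first exact: gvv'.
by rewrite !f_point_off.
Qed.

Let image_coord_inj : injective image_coord.
Proof.
move=> j j' jj'; apply/eqP; apply: contraT => j_neq_j'.
have g_jj' (x : idx k s) : g j (x j) = g j' (x j') by rewrite -!f_image_coord jj'.
move: (g_jj' (point j' a1)) (g_jj' base); rewrite !ffunE (negbTE j_neq_j') eqxx => ->.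
by move/g_inj/eqP; rewrite (negbTE a10).
Qed.

Lemma isometry_wreath_perm : exists rho tau, f = wreath_perm rho tau.
Proof.
pose rho := perm image_coord_inj.
exists rho^-1%g, [ffun c => perm (@g_inj ((rho^-1)%g c))].
apply/permP => x; apply/ffunP => c; rewrite wreath_permE !ffunE permE -f_image_coord.
by have := permKV rho c; rewrite permE => ->.
Qed.

End HammingIsometry.

Lemma hamming_isometry_wreath k s (f : {perm idx k s}) : 1 < s ->
  (forall x y, hamming (f x) (f y) = hamming x y) ->
  exists rho tau, f = wreath_perm rho tau.
Proof.
move=> s_gt1 f_isometry.
by apply: (@isometry_wreath_perm _ _ _ (Ordinal (ltnW s_gt1)) (Ordinal s_gt1)).
Qed.

Lemma binomial_sub_lt k t d :
  1 <= t -> t <= k - 1 -> 1 < d -> 'C(k - d, t) < 'C(k - 1, t).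
Proof.
case: k => [|[|k]] t_ge1 t_le d_gt1; try lia.
case: t t_ge1 t_le => [|t] // _ t_le.
apply: leq_trans (_ : 'C(k, t.+1) < _); first by rewrite ltnS leq_bin2l //; lia.
by rewrite subn1 /= binS -addn1 leq_add2l bin_gt0; lia.
Qed.

Section OArows.
Variables k s t : nat.
Implicit Types (r : oa_row k s t) (x y : idx k s).

Definition covers r x : bool :=
  [forall j, (sval r j == None) || (sval r j == Some (x j))].

Lemma oa_A_eq r1 r2 x1 x2 : oa_A r1 x1 = oa_A r2 x2 <-> covers r1 x1 = covers r2 x2.
Proof. by rewrite /oa_A -/(covers r1 x1) -/(covers r2 x2); do 2!case: (covers _ _). Qed.

Definition row_dom r : {set 'I_k} := [set j | sval r j != None].

Lemma card_row_dom r : #|row_dom r| = t.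
Proof. exact/eqP/(valP r). Qed.

Lemma coversE r x j : covers r x -> sval r j = if j \in row_dom r then Some (x j) else None.
Proof. by move/forallP/(_ j); rewrite inE; case/orP => /eqP ->. Qed.

Lemma covers_subrow r1 r2 : 1 < s -> (forall x, covers r1 x -> covers r2 x) ->
  forall j, sval r2 j = None \/ sval r2 j = sval r1 j.
Proof.
move=> s_gt1 r12 j; case r2j: (sval r2 j) => [w|]; [right | by left].
have [w' w'w] := exists_ord_neq w s_gt1.
pose x : idx k s := [ffun j' => if sval r1 j' is Some v then v else if j' == j then w' else w].
have r1x : covers r1 x.
  by apply/forallP => j'; rewrite ffunE; case: (sval r1 j') => [v|] //=; rewrite eqxx orbT.
move/forallP/(_ j): (r12 x r1x); rewrite r2j ffunE /=.
case: (sval r1 j) => [v /eqP [->] //|].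
by rewrite eqxx => /eqP [] ww'; rewrite ww' eqxx in w'w.
Qed.

Lemma oa_row_inj r1 r2 : 1 < s -> oa_A r1 =1 oa_A r2 -> r1 = r2.
Proof.
move=> s_gt1 r12; have cov12 x : covers r1 x = covers r2 x by apply/oa_A_eq.
have sub12 : forall j, sval r2 j = None \/ sval r2 j = sval r1 j.
  by apply: covers_subrow => // x; rewrite cov12.
have sub21 : forall j, sval r1 j = None \/ sval r1 j = sval r2 j.
  by apply: covers_subrow => // x; rewrite cov12.
by apply/val_inj/ffunP => j; case: (sub12 j) (sub21 j) => -> [] ->.
Qed.

Definition common_rows x y := [set r | covers r x && covers r y].

Lemma card_common_rows x y : #|common_rows x y| = 'C(k - hamming x y, t).
Proof.
have -> : k - hamming x y = #|~: diff_coords x y|.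
  by have := cardsC (diff_coords x y); rewrite card_ord /hamming; lia.
rewrite -cards_draws -(@card_in_imset _ _ row_dom); last first.
  move=> r1 r2; rewrite !inE => /andP [r1x _] /andP [r2x _] dom12.
  by apply/val_inj/ffunP => j; rewrite (coversE j r1x) (coversE j r2x) dom12.
apply: eq_card => J; rewrite inE; apply/imsetP/andP => [[r]|[J_sub /eqP J_card]].
  rewrite inE => /andP [rx ry] ->; split; last by rewrite card_row_dom.
  apply/subsetP => j j_dom; rewrite !inE negbK.
  by have := coversE j rx; rewrite (coversE j ry) j_dom => -[->].
pose a : {ffun 'I_k -> option 'I_s} := [ffun j => if j \in J then Some (x j) else None].
have dom_a : [set j | a j != None] = J by apply/setP => j; rewrite !inE ffunE; case: ifP.
have a_card : #|[set j | a j != None]| == t by rewrite dom_a J_card.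
exists (exist _ a a_card); last by rewrite /row_dom /= dom_a.
rewrite inE; apply/andP; split; apply/forallP => j /=; rewrite ffunE.
  by case: ifP; rewrite ?eqxx ?orbT.
case: ifP => // j_J; move/subsetP: J_sub => /(_ j j_J).
by rewrite !inE negbK => /eqP ->; rewrite eqxx orbT.
Qed.

Lemma hamming_le1_common_rows x y : 1 <= t -> t <= k - 1 ->
  (hamming x y <= 1) = ('C(k - 1, t) <= #|common_rows x y|).
Proof.
move=> t_ge1 t_le; rewrite card_common_rows; apply/idP/idP => [xy_le1|].
  by apply: leq_bin2l; lia.
by apply: contraTT; rewrite -!ltnNge; exact: binomial_sub_lt.
Qed.

End OArows.

Section OASymmetries.
Variables k s t lam pmax : nat.
Implicit Type pi : {perm idx k s}.

Lemma oa_form_sym_isometry pi : 1 <= t -> t <= k - 1 ->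
  oa_form_sym k s t lam pmax pi -> forall x y, hamming (pi x) (pi y) = hamming x y.
Proof.
move=> t_ge1 t_le [_ [[sigma [A_pi _]] _]].
have covers_pi r x : covers (sigma r) (pi x) = covers r x by apply/oa_A_eq/A_pi.
have common_pi x y : #|common_rows t (pi x) (pi y)| = #|common_rows t x y|.
  rewrite -(card_preimset _ (@perm_inj _ sigma)).
  by apply: eq_card => r; rewrite !inE !covers_pi.
by apply: hamming_perm_isometry => x y; rewrite !(hamming_le1_common_rows _ _ t_ge1 t_le) common_pi.
Qed.

Lemma oa_form_sym_of_rows pi : 1 < s ->
  (forall r : oa_row k s t, exists r' : oa_row k s t, forall x, oa_A r' (pi x) = oa_A r x) ->
  oa_form_sym k s t lam pmax pi.
Proof.
move=> s_gt1 A_pi; split=> //; split.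
  have [sigma sigmaE] := exists_row_perm (fun r1 r2 => oa_row_inj s_gt1) A_pi.
  by exists sigma.
have bound_inj : injective (fun r : bool * idx k s => (r.1, pi r.2)).
  by move=> [b1 x1] [b2 x2] [-> /perm_inj ->].
exists (perm bound_inj); split=> r; rewrite permE //.
by move=> x; rewrite /oa_B /= (inj_eq perm_inj).
Qed.

Lemma wreath_oa_form_sym rho tau : 1 < s -> oa_form_sym k s t lam pmax (wreath_perm rho tau).
Proof.
move=> s_gt1; apply: oa_form_sym_of_rows => // r.
pose a : {ffun 'I_k -> option 'I_s} := [ffun j => omap (tau j) (sval r (rho j))].
have a_card : #|[set j | a j != None]| == t.
  have -> : [set j | a j != None] = rho @^-1: row_dom r.
    by apply/setP => j; rewrite !inE ffunE; case: (sval r (rho j)).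
  by rewrite card_preimset ?card_row_dom //; exact: perm_inj.
exists (exist _ a a_card) => x; apply/oa_A_eq; rewrite wreath_permE.
have a_covers j : (a j == None) || (a j == Some ([ffun j => tau j (x (rho j))] j)) =
                  (sval r (rho j) == None) || (sval r (rho j) == Some (x (rho j))).
  rewrite !ffunE; case: (sval r (rho j)) => [v|] //=.
  by rewrite !(inj_eq (@Some_inj _)) (inj_eq perm_inj).
apply/forallP/forallP => /= covers_a j; last by rewrite a_covers.
by have := covers_a ((rho^-1)%g j); rewrite a_covers permKV.
Qed.

End OASymmetries.

Unset Implicit Arguments.

Theorem lemma8 (R : realFieldType) (k s t N pmax : nat) :
  2 <= s -> 1 <= t -> t <= k - 1 -> 0 < N -> s ^ t %| N ->
  0 < pmax -> pmax <= N %/ s ^ t ->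
  (forall pi : {perm idx k s},
      oa_form_sym k s t (N %/ s ^ t) pmax pi <-> pi \in Giso k s) /\
  #|Giso k s| = k`! * (s`!) ^ k /\
  (forall pi : {perm idx k s},
      oa_form_sym k s t (N %/ s ^ t) pmax pi ->
      oa_lp_sym R k s t (N %/ s ^ t) pmax pi) /\
  (exists S : {set {perm idx k s}},
      k`! * (s`!) ^ k <= #|S| /\
      forall pi, pi \in S -> oa_lp_sym R k s t (N %/ s ^ t) pmax pi).
Proof.
(* The right-hand sides [lambda] and [pmax] are the same in every row, so
   their values do not constrain the symmetries. *)
move=> s_gt1 t_ge1 t_le _ _ _ _.
have G_Giso pi : oa_form_sym k s t (N %/ s ^ t) pmax pi <-> pi \in Giso k s.
  rewrite Giso_wreath; split=> [|/imsetP [[rho tau] _ ->]]; last exact: wreath_oa_form_sym.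
  move=> /(oa_form_sym_isometry t_ge1 t_le) /(hamming_isometry_wreath s_gt1) [rho [tau ->]].
  exact: mem_wreath_set.
have G_LP pi : oa_form_sym k s t (N %/ s ^ t) pmax pi -> oa_lp_sym R k s t (N %/ s ^ t) pmax pi.
  exact: formulation_sym_lp_sym.
have card_Giso : #|Giso k s| = k`! * (s`!) ^ k by rewrite Giso_wreath card_wreath_set.
split=> //; split=> //; split=> //.
by exists (Giso k s); rewrite card_Giso; split=> // pi /G_Giso /G_LP.
Qed.
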